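(* Let $U=\{u_1,\dots,u_{3n}\}$ with $n\ge1$ and let $\mathcal{S}=\{S_1,\dots,S_p\}$, $p\ge 1$, be a family of $3$-element subsets of $U$. Fix an integer $m\ge 6n+3p$. Build the labeled complete bipartite graph $G$ with partite sets $V_1=\{x_1,\dots,x_{3n}\}\cup\{x(S_1),\dots,x(S_p)\}$ and $V_2=\{y_1,\dots,y_{3n}\}\cup\{y_k(S_i):1\le i\le p,\,1\le k\le m\}\cup\{z_1,\dots,z_{3n}\}$, with labels: $x_iy_j$ is $+$ iff $i=j$ or $u_i,u_j$ lie in a common member of $\mathcal{S}$; $x(S_i)y_k(S_\ell)$ is $+$ iff $i=\ell$; $x_iy_k(S_j)$ and $x(S_j)y_i$ are $+$ iff $u_i\in S_j$; $x_iz_j$ is $+$ for all $i,j$; $x(S_i)z_j$ is $-$ for all $i,j$. Assign tolerances $t_{x(S_i)}=3$ and $t_{x_i}=m(d(u_i)-1)+(c(u_i)-2)+(3n-3)$, where $d(u_i)$ is the number of members of $\mathcal{S}$ containing $u_i$ and $c(u_i)$ is the number of $u_j\in U\setminus\{u_i\}$ lying in a common member of $\mathcal{S}$ with $u_i$. Suppose $G$ has a clustering in which each $v\in V_1$ has at most $t_v$ incident errors. Then for every $u_j\in U$ there is a unique $S_i\in\mathcal{S}$ such that $x_j$ is in the same cluster as $x(S_i)$, and this $S_i$ satisfies: (1) $u_j\in S_i$, and (2) $x_j$ is in the same cluster as every vertex $y_\ell$ with $u_\ell\in S_i$.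
   Context: A clustering is a partition of $V(G)$. An error at a vertex $v$ is an incident edge that is a $+$ edge between different clusters or a $-$ edge within a cluster. *)

From HB Require Import structures.
From mathcomp Require Import all_boot all_order all_algebra.
Set Implicit Arguments. Unset Strict Implicit. Unset Printing Implicit Defensive.
Import Order.TTheory GRing.Theory Num.Theory.

(* V1 = {x_1..x_{3n}} + {x(S_1)..x(S_p)} *)
Definition V1 (n p : nat) : finType := ('I_(3 * n) + 'I_p)%type.
(* V2 = ({y_1..y_{3n}} + {y_k(S_i)}) + {z_1..z_{3n}};
   y_k(S_i) is represented as (i, k) *)
Definition V2 (n p m : nat) : finType :=
  ('I_(3 * n) + ('I_p * 'I_m) + 'I_(3 * n))%type.
Definition vert (n p m : nat) : finType := (V1 n p + V2 n p m)%type.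

Section Construction.
Variables (n p m : nat) (S : 'I_p -> {set 'I_(3 * n)}).

Definition together (i j : 'I_(3 * n)) : bool :=
  [exists l : 'I_p, (i \in S l) && (j \in S l)].

(* label of the edge v w (v in V1, w in V2): true = '+', false = '-' *)
Definition plus_edge (v : V1 n p) (w : V2 n p m) : bool :=
  match v, w with
  | inl i, inl (inl j) => (i == j) || together i j
  | inl i, inl (inr (l, _)) => i \in S l
  | inl _, inr _ => true
  | inr l, inl (inl i) => i \in S l
  | inr i, inl (inr (l, _)) => i == l
  | inr _, inr _ => false
  end.

(* number of errors at a vertex v of V1 under the clustering P
   (every edge at v goes to V2 since G is complete bipartite) *)
Definition errors (P : {set {set vert n p m}}) (v : V1 n p) : nat :=
  #|[set w : V2 n p m |
      (plus_edge v w && (pblock P (inl v) != pblock P (inr w)))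
   || (~~ plus_edge v w && (pblock P (inl v) == pblock P (inr w)))]|.

Definition dS (i : 'I_(3 * n)) : nat := #|[set l : 'I_p | i \in S l]|.
Definition cS (i : 'I_(3 * n)) : nat :=
  #|[set j : 'I_(3 * n) | (j != i) && together i j]|.

(* tolerances (integers, since they may be negative) *)
Definition tol (v : V1 n p) : int :=
  match v with
  | inl i => (m%:Z * ((dS i)%:Z - 1) + ((cS i)%:Z - 2) + ((3 * n)%:Z - 3))%R
  | inr _ => 3%:Z
  end.

End Construction.

From mathcomp Require Import all_boot all_order all_algebra.
From mathcomp Require Import zify.
Import Order.TTheory GRing.Theory Num.Theory.

(* Two vertices of V1 in one cluster pay, between them, one error for each vertex
   of V2 on which their labels disagree and two for each common + neighbour outside
   the cluster; two vertices in different clusters pay one error for each common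
   + neighbour.  Hence two x(S_i) in one cluster pay for the m vertices y_k(S_i),
   more than 3 + 3; an x_j separated from every x(S_i) with u_j in S_i pays for
   all d(u_j) m vertices y_k(S_i), more than t_{x_j} plus the 3 d(u_j) errors those
   x(S_i) can absorb; and if x_j sits with x(S_i) while some y_l with u_l in S_i
   does not, x_j and x(S_i) pay t_{x_j} + 3 + 2 errors together. *)

Set Implicit Arguments. Unset Strict Implicit.

Lemma sum_nat_card (T : finType) (b : pred T) :
  (\sum_(x : T) (b x : nat) = #|[set x | b x]|)%N.
Proof. by rewrite -sum1dep_card [RHS]big_mkcond; apply: eq_bigr => x _; case: (b x). Qed.

Lemma card_sum_set (T1 T2 : finType) (A : pred (T1 + T2)) :
  #|[set x | A x]| = (#|[set x1 | A (inl x1)]| + #|[set x2 | A (inr x2)]|)%N.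
Proof. by rewrite -!sum_nat_card big_sumType. Qed.

Section Clustering.
Variables (n p m : nat) (S : 'I_p -> {set 'I_(3 * n)}) (P : {set {set vert n p m}}).

Notation B := (pblock P).
Notation plus := (@plus_edge n p m S).

Definition error_edge (v : V1 n p) (w : V2 n p m) : bool :=
  (plus v w && (B (inl v) != B (inr w))) || (~~ plus v w && (B (inl v) == B (inr w))).

Definition disagree (v v' : V1 n p) : {set V2 n p m} :=
  [set w | plus v w != plus v' w].

Lemma yS_inj (l : 'I_p) : injective (fun k : 'I_m => inl (inr (l, k)) : V2 n p m).
Proof. by move=> k k' []. Qed.

Lemma errors_sum v : errors S P v = (\sum_w (error_edge v w : nat))%N.
Proof. by rewrite sum_nat_card. Qed.

Lemma sum_error_edge_inj (T : finType) (f : T -> V2 n p m) v :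
  injective f -> (\sum_t (error_edge v (f t) : nat) <= errors S P v)%N.
Proof.
move=> f_inj; rewrite errors_sum !sum_nat_card.
rewrite -(card_imset _ f_inj); apply: subset_leq_card.
by apply/subsetP => _ /imsetP[t + ->]; rewrite !inE.
Qed.

Lemma error_edge_same_block v v' w : B (inl v) = B (inl v') ->
  ((plus v w != plus v' w) + 2 * [&& plus v w, plus v' w & B (inl v) != B (inr w)]
   <= error_edge v w + error_edge v' w)%N.
Proof.
by rewrite /error_edge => <-; case: (plus v w); case: (plus v' w); case: (B _ == B _).
Qed.

Lemma error_edge_split_blocks v v' w : B (inl v) != B (inl v') ->
  plus v w -> plus v' w -> (0 < error_edge v w + error_edge v' w)%N.
Proof.
rewrite /error_edge => ne -> -> /=.
by case: eqP => [e|] //; case: eqP => [e'|] //; rewrite e e' eqxx in ne.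
Qed.

Lemma errors_same_block v v' : B (inl v) = B (inl v') ->
  (#|disagree v v'|
   + 2 * #|[set w | [&& plus v w, plus v' w & B (inl v) != B (inr w)]]|
   <= errors S P v + errors S P v')%N.
Proof.
move=> vv'; rewrite !errors_sum -big_split /disagree -!sum_nat_card big_distrr -big_split.
by apply: leq_sum => w _; exact: error_edge_same_block.
Qed.

Lemma errors_split_blocks (j : 'I_(3 * n)) :
  (forall l, j \in S l -> B (inl (inl j)) != B (inl (inr l))) ->
  (dS S j * m <= errors S P (inl j) + \sum_(l | j \in S l) errors S P (inr l))%N.
Proof.
move=> apart; rewrite /dS -sum_nat_cond_const.
apply: leq_trans (_ : _ <= \sum_(l | j \in S l)
    (\sum_k error_edge (inl j) (inl (inr (l, k))) + errors S P (inr l)))%N _.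
  apply: leq_sum => l jl.
  apply: leq_trans (leq_add (leqnn _) (sum_error_edge_inj _ (@yS_inj l))).
  rewrite -big_split /= -{1}(card_ord m) -sum1_card.
  by apply: leq_sum => k _; apply: error_edge_split_blocks; rewrite //= ?eqxx ?apart.
rewrite big_split /= leq_add2r; apply: leq_trans (_ : _ <= \sum_l \sum_k
  (error_edge (inl j) (inl (inr (l, k))) : nat))%N _.
  by rewrite [leqRHS](bigID (fun l => j \in S l)) leq_addr.
rewrite pair_bigA /=; apply: sum_error_edge_inj.
by move=> [l k] [l' k'] [-> ->].
Qed.

Lemma card_disagree_xS (i i' : 'I_p) : i != i' ->
  (m <= #|disagree (inr i) (inr i')|)%N.
Proof.
move=> ii'; rewrite /disagree -{1}(card_ord m) -(card_imset _ (@yS_inj i)); apply: subset_leq_card.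
by apply/subsetP => _ /imsetP[k _ ->]; rewrite inE /= eqxx [i' == i]eq_sym (negbTE ii').
Qed.

Lemma together_mem (i : 'I_p) (j l : 'I_(3 * n)) :
  j \in S i -> l \in S i -> together S j l.
Proof. by move=> ji li; apply/existsP; exists i; rewrite ji li. Qed.

Lemma card_disagree_x_xS (i : 'I_p) (j : 'I_(3 * n)) : j \in S i -> #|S i| = 3 ->
  (#|disagree (inl j) (inr i)| + m + 3 = cS S j + 1 + dS S j * m + 3 * n)%N.
Proof.
move=> ji Si3; rewrite /disagree !card_sum_set.
set Tg : {set 'I_(3 * n)} := [set l | (j == l) || together S j l].
have -> : [set l | plus (inl j) (inl (inl l)) != plus (inr i) (inl (inl l))]
          = Tg :\: S i.
  apply/setP => l; rewrite !inE /=; case li: (l \in S i) => /=.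
    by rewrite (together_mem ji li) orbT.
  by case: (_ || _).
have -> : [set lk | plus (inl j) (inl (inr lk)) != plus (inr i) (inl (inr lk))]
          = setX [set l | (l != i) && (j \in S l)] [set: 'I_m].
  apply/setP => -[l k]; rewrite !inE andbT /= [i == l]eq_sym.
  by have [->|li] := eqVneq l i; rewrite ?eqxx ?ji /=; case: (j \in S l).
have -> : #|[set z | plus (inl j) (inr z) != plus (inr i) (inr z)]| = (3 * n)%N.
  by rewrite -[RHS]card_ord; apply: eq_card => z; rewrite inE.
have card_Tg : #|Tg| = (cS S j).+1.
  rewrite (cardsD1 j) inE eqxx /= add1n; congr _.+1; apply: eq_card => l.
  by rewrite !inE; case: eqVneq => [->|]; rewrite ?eqxx ?andbF // eq_sym => /negbTE->.
have card_dS : dS S j = #|[set l | (l != i) && (j \in S l)]|.+1.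
  by rewrite /dS (cardsD1 i) inE ji add1n; congr _.+1; apply: eq_card => l; rewrite !inE.
have STg : S i \subset Tg by apply/subsetP => l li; rewrite inE (together_mem ji li) orbT.
have := cardsID (S i) Tg; rewrite (setIidPr STg) Si3 card_Tg.
rewrite cardsX [#|[set: 'I_m]|]cardsT [#|'I_m|]card_ord card_dS [_.+1 * m]mulSn.
(* [set] identifies card terms differing only in hidden coercions; [lia] does not *)
set A := #|Tg :\: S i|; lia.
Qed.

Lemma errors_xS_same_block (i i' : 'I_p) : i != i' ->
  B (inl (inr i)) = B (inl (inr i')) ->
  (m <= errors S P (inr i) + errors S P (inr i'))%N.
Proof.
move=> ii' xSi_xSi'; apply: leq_trans (errors_same_block xSi_xSi').
exact: leq_trans (card_disagree_xS ii') (leq_addr _ _).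
Qed.

Lemma errors_x_xS_same_block (i : 'I_p) (j l : 'I_(3 * n)) :
  j \in S i -> #|S i| = 3 -> l \in S i ->
  B (inl (inl j)) = B (inl (inr i)) -> B (inl (inl j)) != B (inr (inl (inl l))) ->
  (cS S j + dS S j * m + 3 * n <= errors S P (inl j) + errors S P (inr i) + m)%N.
Proof.
move=> ji Si3 li xj_xSi yl_apart.
have yl_cut : (0 < #|[set w | [&& plus (inl j) w, plus (inr i) w
                                & B (inl (inl j)) != B (inr w)]]|)%N.
  by apply/card_gt0P; exists (inl (inl l)); rewrite !inE /= li (together_mem ji li) orbT.
move: yl_cut; have := errors_same_block xj_xSi; have := card_disagree_x_xS ji Si3.
set D := #|disagree _ _|; set W := #|[set w | _]|; lia.
Qed.

End Clustering.

Theorem lemma4 (n p m : nat) (S : 'I_p -> {set 'I_(3 * n)})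
  (P : {set {set vert n p m}}) :
  (1 <= n)%N -> (1 <= p)%N ->
  injective S ->
  (forall i, #|S i| = 3) ->
  (6 * n + 3 * p <= m)%N ->
  partition P [set: vert n p m] ->
  (forall v : V1 n p, ((@errors n p m S P v)%:Z <= @tol n p m S v)%R) ->
  forall j : 'I_(3 * n),
    exists i : 'I_p,
      [/\ pblock P (inl (inl j)) = pblock P (inl (inr i)),
          (forall i' : 'I_p,
              pblock P (inl (inl j)) = pblock P (inl (inr i')) -> i' = i),
          j \in S i &
          (forall l : 'I_(3 * n), l \in S i ->
              pblock P (inl (inl j)) = pblock P (inr (inl (inl l))))].
Proof.
move=> n_gt0 p_gt0 _ Si3 m_large _ tolerated j.
have errors_xS (l : 'I_p) : (errors S P (inr l) <= 3)%N.
  by have := tolerated (inr l); rewrite /=; lia.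
have errors_x : (errors S P (inl j) + m + 5 <= dS S j * m + cS S j + 3 * n)%N.
  by have := tolerated (inl j); rewrite /= mulrBr mulr1 -PoszM; lia.
have cS_le : (cS S j <= 3 * n)%N by rewrite -[X in (_ <= X)%N]card_ord max_card.
have dS_le : (dS S j <= p)%N by rewrite -[X in (_ <= X)%N]card_ord max_card.
have [i /andP[ji /eqP xj_xSi]|none] := pickP (fun i => (j \in S i)
    && (pblock P (inl (inl j)) == pblock P (inl (inr i)))); last first.
  have apart l : j \in S l -> pblock P (inl (inl j)) != pblock P (inl (inr l)).
    by move=> jl; apply/eqP => e; move: (none l); rewrite /= jl e eqxx.
  have := errors_split_blocks apart.
  have : (\sum_(l | j \in S l) errors S P (inr l) <= dS S j * 3)%N.
    by rewrite /dS -sum_nat_cond_const leq_sum.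
  lia.
exists i; split => // [i' xj_xSi' | l li].
  apply/eqP; apply: contraT => i'i.
  have := errors_xS_same_block S i'i (etrans (esym xj_xSi') xj_xSi).
  have := errors_xS i; have := errors_xS i'; lia.
apply/eqP; apply: contraT => yl_apart.
have := errors_x_xS_same_block ji (Si3 i) li xj_xSi yl_apart.
have := errors_xS i; lia.
Qed.
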